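(* Let $T$ be a tree on $n$ vertices. Then \[ D_{\max}(T)-\partial(T)\geq \frac{2n-2-\sqrt{4n^2-12n+12}}{2} \] and \[ 2D_{\max}(T)-\partial^Q(T)\geq \frac{3n-4-\sqrt{9n^2-32n+32}}{2}, \] with equality (in either inequality) if and only if $T\cong K_{1,n-1}$.
   Context: For a connected graph $G$ with vertex set $\{v_1,\dots,v_n\}$, the distance matrix $D(G)$ is the $n\times n$ matrix whose $(i,j)$-entry is the distance between $v_i$ and $v_j$, and $\partial(G)$ denotes its largest eigenvalue (the distance spectral radius). The transmission $D_i$ of $v_i$ is the $i$-th row sum of $D(G)$, and $D_{\max}(G)$ is the maximum transmission over all vertices. The distance signless Laplacian matrix is $Q(G)=D(G)+\mathrm{diag}(D_1,\dots,D_n)$, and $\partial^Q(G)$ denotes its largest eigenvalue. $K_{1,n-1}$ is the star on $n$ vertices. *)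

From HB Require Import structures.
From mathcomp Require Import all_boot all_order all_algebra perm.
From mathcomp Require Import classical_sets reals.
Set Implicit Arguments. Unset Strict Implicit. Unset Printing Implicit Defensive.
Import Order.TTheory GRing.Theory Num.Theory.
Local Open Scope classical_set_scope.
Local Open Scope ring_scope.

Definition simple_graph (n : nat) (e : rel 'I_n) : Prop :=
  irreflexive e /\ symmetric e.

Definition connected_graph (n : nat) (e : rel 'I_n) : Prop :=
  forall x y : 'I_n, connect e x y.

Definition acyclic_graph (n : nat) (e : rel 'I_n) : Prop :=
  forall c : seq 'I_n, uniq c -> (3 <= size c)%N -> ~~ path.cycle e c.

Definition is_tree (n : nat) (e : rel 'I_n) : Prop :=
  [/\ simple_graph e, connected_graph e & acyclic_graph e].

Definition walk_len (n : nat) (e : rel 'I_n) (x y : 'I_n) (k : nat) : bool :=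
  [exists p : k.-tuple 'I_n, path e x p && (last x p == y)].

(* graph distance = least length of a walk from x to y (for a connected
   graph this is < n, so the search over 0..n-1 finds it) *)
Definition gdist (n : nat) (e : rel 'I_n) (x y : 'I_n) : nat :=
  find (walk_len e x y) (iota 0 n).

Definition dist_mx (R : realType) (n : nat) (e : rel 'I_n) : 'M[R]_n :=
  \matrix_(i, j) (gdist e i j)%:R.

Definition transmission (n : nat) (e : rel 'I_n) (i : 'I_n) : nat :=
  (\sum_(j < n) gdist e i j)%N.

Definition Dmax (n : nat) (e : rel 'I_n) : nat :=
  (\max_(i < n) transmission e i)%N.

Definition distQ_mx (R : realType) (n : nat) (e : rel 'I_n) : 'M[R]_n :=
  dist_mx R e + diag_mx (\row_i (transmission e i)%:R).

Definition largest_eig (R : realType) (n : nat) (A : 'M[R]_n) : R :=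
  sup [set a : R | eigenvalue A a].

Definition star_rel (n : nat) : rel 'I_n :=
  fun x y => (x != y) && ((val x == 0%N) || (val y == 0%N)).

Definition graph_iso (n : nat) (e f : rel 'I_n) : Prop :=
  exists s : {perm 'I_n}, forall x y, e x y = f (s x) (s y).

From HB Require Import structures.
From mathcomp Require Import all_boot all_order all_algebra perm.
From mathcomp Require Import boolp classical_sets reals.
From mathcomp Require Import zify ring lra.
Set Implicit Arguments. Unset Strict Implicit. Unset Printing Implicit Defensive.
Import Order.TTheory GRing.Theory Num.Theory.

(* Both inequalities are Collatz-Wielandt bounds with the vector w of transmissions: for a
   nonnegative matrix A and a positive vector w, w A <= b w forces every real eigenvalue of A
   to be at most b, and w A = b w makes b the largest one.
   In a tree, moving from a vertex j to a neighbour y changes the transmission by n - 2|B|,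
   where B is the branch of y at j; stepping towards a small branch shows that every internal
   vertex has D_j <= Dmax - (n - 2). Charging each leaf to its neighbour then gives, for a
   tree that is not a star, D_j <= 2 sum_i d(i,j) (Dmax - D_i), and even
   3 D_j <= 4 sum_i d(i,j) (Dmax - D_i) when D_j = Dmax. Hence (w D)_j <= (Dmax - 1/2) w_j and
   (w Q)_j <= (2 Dmax - 3/4) w_j, whereas the two bounds of the theorem are below 1/2 and 3/4.
   For the star, D and Q have positive eigenvectors taking one value at the centre and
   another on the leaves, and their eigenvalues give equality. *)

Section Walks.
Variables (n : nat) (e : rel 'I_n).

Lemma walk_lenP x y k :
  reflect (exists p : seq 'I_n, [/\ size p = k, path e x p & last x p = y])
          (walk_len e x y k).
Proof.
apply: (iffP existsP) => [[p /andP[hp /eqP hl]]|[p [hs hp hl]]].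
  by exists (tval p); rewrite size_tuple.
have hs' : size p == k by rewrite hs.
by exists (Tuple hs'); rewrite /= hp hl eqxx.
Qed.

Lemma walk_len0 x y : walk_len e x y 0 = (x == y).
Proof. by apply/walk_lenP/eqP => [[p [/size0nil -> _ <-]]|<-] //; exists [::]. Qed.

Lemma walk_lenS x y k :
  walk_len e x y k.+1 -> exists2 z, e x z & walk_len e z y k.
Proof.
case/walk_lenP => [[|z p] [//= [hs] /andP[hxz hp] hl]].
by exists z => //; apply/walk_lenP; exists p.
Qed.

Lemma walk_len_cons x y z k :
  e x z -> walk_len e z y k -> walk_len e x y k.+1.
Proof.
move=> hxz /walk_lenP [p [hs hp hl]]; apply/walk_lenP; exists (z :: p).
by rewrite /= hs hxz hp.
Qed.

End Walks.

Section Distance.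
Variables (n : nat) (e : rel 'I_n).
Hypothesis e_conn : connected_graph e.

Lemma short_walk x y : exists2 k, (k < n)%N & walk_len e x y k.
Proof.
case/connectP: (e_conn x y) => p /shortenP [p' hp' hu _] ->.
exists (size p'); last by apply/walk_lenP; exists p'.
by have := max_card (mem (x :: p')); rewrite card_ord (card_uniqP hu).
Qed.

Let has_short_walk x y : has (walk_len e x y) (iota 0 n).
Proof. by have [k hk hw] := short_walk x y; apply/hasP; exists k; rewrite ?mem_iota. Qed.

Lemma gdist_walk x y : walk_len e x y (gdist e x y).
Proof.
have hlt := has_short_walk x y; rewrite has_find size_iota in hlt.
by have := nth_find 0%N (has_short_walk x y); rewrite nth_iota.
Qed.

Lemma gdist_min x y k : walk_len e x y k -> (gdist e x y <= k)%N.
Proof.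
move=> hw; have hlt := has_short_walk x y; rewrite has_find size_iota in hlt.
rewrite leqNgt; apply/negP => hk.
by have := before_find 0%N hk; rewrite nth_iota ?(ltn_trans hk) // hw.
Qed.

Lemma gdist_eq0 x y : (gdist e x y == 0%N) = (x == y).
Proof.
apply/eqP/eqP => [h|<-]; first by have := gdist_walk x y; rewrite h walk_len0 => /eqP.
by apply/eqP; rewrite -leqn0 gdist_min // walk_len0.
Qed.

Lemma gdist_xx x : gdist e x x = 0%N.
Proof. by apply/eqP; rewrite gdist_eq0. Qed.

Lemma gdist_adj_le x y z : e x z -> (gdist e x y <= (gdist e z y).+1)%N.
Proof. by move=> hxz; apply/gdist_min/(walk_len_cons hxz)/gdist_walk. Qed.

Lemma gdist_predS x y k :
  gdist e x y = k.+1 -> exists2 z, e x z & gdist e z y = k.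
Proof.
move=> hk; have := gdist_walk x y; rewrite hk => /walk_lenS [z hxz hw].
exists z => //; apply/eqP; rewrite eqn_leq gdist_min //=.
by rewrite -ltnS -hk gdist_adj_le.
Qed.

Lemma gdist_triangle x y z : (gdist e x y <= gdist e x z + gdist e z y)%N.
Proof.
move hk: (gdist e x z) => k; elim: k x hk => [|k IH] x hk.
  by move/eqP: hk; rewrite gdist_eq0 => /eqP ->.
have [x' hxx' hk'] := gdist_predS hk.
by apply: leq_trans (gdist_adj_le y hxx') _; rewrite addSn ltnS IH.
Qed.

Hypotheses (e_irr : irreflexive e) (e_sym : symmetric e).

Lemma gdist_eq1 x y : (gdist e x y == 1%N) = e x y.
Proof.
apply/eqP/idP => [h|hxy].
  by have [z hxz /eqP] := gdist_predS h; rewrite gdist_eq0 => /eqP <-.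
apply/eqP; rewrite eqn_leq gdist_min ?(walk_len_cons hxy) ?walk_len0 //=.
by rewrite lt0n gdist_eq0; apply: contraTneq hxy => ->; rewrite e_irr.
Qed.

Lemma gdist_sym x y : gdist e x y = gdist e y x.
Proof.
suff le_dist a b : (gdist e a b <= gdist e b a)%N by apply/eqP; rewrite eqn_leq !le_dist.
move hk: (gdist e b a) => k; elim: k a b hk => [|k IH] a b hk.
  by move/eqP: hk; rewrite gdist_eq0 => /eqP ->; rewrite gdist_xx.
have [b' hbb' hk'] := gdist_predS hk.
apply: leq_trans (gdist_triangle a b b') _.
by move: hbb'; rewrite e_sym -gdist_eq1 => /eqP ->; rewrite addn1 ltnS IH.
Qed.

End Distance.

Section CollatzWielandt.
Local Open Scope ring_scope.
Variables (R : realFieldType) (n : nat) (A : 'M[R]_n) (w : 'I_n -> R).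
Hypotheses (A_ge0 : forall i j, 0 <= A i j) (w_gt0 : forall i, 0 < w i).

(* Compare the eigenvector with [w] at the index where [|v_j| / w_j] is maximal. *)
Lemma eigenvalue_le_colsum_bound b a :
  (forall j, \sum_i w i * A i j <= b * w j) -> eigenvalue A a -> a <= b.
Proof.
move=> hb /eigenvalueP [v hv hv0].
have [i0 hi0] : exists i0, v 0 i0 != 0.
  apply/existsP; apply: contraNT hv0; rewrite negb_exists => /forallP h.
  by apply/eqP/rowP => i; rewrite mxE; exact/eqP/negbNE/h.
pose F j := `|v 0 j| / w j.
have [j _ hj] := @arg_maxP _ _ _ i0 xpredT F isT.
have Fj_gt0 : 0 < F j by apply: lt_le_trans (hj i0 isT); rewrite divr_gt0 ?normr_gt0.
have hvj : `|v 0 j| = F j * w j by rewrite /F mulrVK // unitfE gt_eqF.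
have hvi i : `|v 0 i| <= F j * w i by rewrite -ler_pdivrMr //; exact: hj.
have hav : a * v 0 j = \sum_i v 0 i * A i j.
  by have := congr1 (fun M : 'rV[R]_n => M 0 j) hv; rewrite !mxE => <-.
have : `|a| * `|v 0 j| <= F j * (b * w j).
  rewrite -normrM hav; apply: le_trans (ler_norm_sum _ _ _) _.
  apply: le_trans (_ : \sum_i F j * (w i * A i j) <= _).
    apply: ler_sum => i _; rewrite normrM (ger0_norm (A_ge0 i j)) mulrA.
    exact: ler_wpM2r.
  by rewrite -mulr_sumr ler_wpM2l // ltW.
rewrite hvj mulrCA ler_pM2l // ler_pM2r //.
exact: le_trans (ler_norm a).
Qed.

Lemma eigenvalue_colsum_eq (i0 : 'I_n) b :
  (forall j, \sum_i w i * A i j = b * w j) -> eigenvalue A b.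
Proof.
move=> hb; apply/eigenvalueP; exists (\row_i w i).
  by apply/rowP => j; rewrite !mxE -hb; apply: eq_bigr => i _; rewrite mxE.
apply/eqP => /(congr1 (fun M : 'rV[R]_n => M 0 i0)); rewrite !mxE.
by apply/eqP; rewrite gt_eqF.
Qed.

End CollatzWielandt.

Section LargestEigenvalue.
Local Open Scope ring_scope.
Variables (R : realType) (n : nat) (A : 'M[R]_n).

(* The junk value [sup set0 = 0] makes [0 <= b] necessary. *)
Lemma largest_eig_le b :
  0 <= b -> (forall a, eigenvalue A a -> a <= b) -> largest_eig A <= b.
Proof.
move=> hb0 hb; rewrite /largest_eig.
have [[a ha]|hne] := pselect ([set a : R | eigenvalue A a] !=set0)%classic.
  by apply: ge_sup; [exists a | move=> x; exact: hb].
suff -> : [set a : R | eigenvalue A a]%classic = set0%classic by rewrite sup0.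
by apply/seteqP; split => x //= hx; apply: hne; exists x.
Qed.

Lemma largest_eig_eq b :
  eigenvalue A b -> (forall a, eigenvalue A a -> a <= b) -> largest_eig A = b.
Proof.
move=> hb hall; apply/eqP; rewrite eq_le; apply/andP; split.
  by apply: ge_sup; [exists b | move=> x; exact: hall].
by apply: ub_le_sup => //; exists b => x; exact: hall.
Qed.

Lemma largest_eig_pos_eigenvector (w : 'I_n -> R) b (i0 : 'I_n) :
  (forall i j, 0 <= A i j) -> (forall i, 0 < w i) ->
  (forall j, \sum_i w i * A i j = b * w j) -> largest_eig A = b.
Proof.
move=> A_ge0 w_gt0 hb; apply: largest_eig_eq; first exact: (eigenvalue_colsum_eq w_gt0 i0).
by move=> a; apply: (eigenvalue_le_colsum_bound A_ge0 w_gt0) => j; rewrite hb.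
Qed.

End LargestEigenvalue.

Section DistanceMatrices.
Local Open Scope ring_scope.
Variables (R : realType) (n : nat) (e : rel 'I_n).

Lemma dist_mx_ge0 i j : 0 <= dist_mx R e i j.
Proof. by rewrite mxE. Qed.

Lemma distQ_mx_ge0 i j : 0 <= distQ_mx R e i j.
Proof. by rewrite !mxE addr_ge0 ?mulrn_wge0. Qed.

Lemma distQ_mx_colsum (w : 'I_n -> R) j :
  \sum_i w i * distQ_mx R e i j =
  \sum_i w i * dist_mx R e i j + w j * (transmission e j)%:R.
Proof.
under eq_bigr => i _ do rewrite mxE mulrDr.
rewrite big_split /=; congr (_ + _).
rewrite (bigD1 j) //= !mxE eqxx mulr1n big1 ?addr0 // => i /negbTE hij.
by rewrite !mxE hij mulr0n mulr0.
Qed.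

End DistanceMatrices.

Section StarIsomorphism.
Variables (n : nat) (e : rel 'I_n).
Hypothesis n_gt0 : (0 < n)%N.

Let val_perm_eq0 (s : {perm 'I_n}) a :
  (val (s a) == 0%N) = (a == (s^-1)%g (Ordinal n_gt0)).
Proof.
rewrite -[_ == _]/(s a == Ordinal n_gt0) -{1}(permKV s (Ordinal n_gt0)).
by rewrite (inj_eq perm_inj).
Qed.

Lemma graph_iso_starP : graph_iso e (@star_rel n) <->
  exists c, forall x y, e x y = (x != y) && ((x == c) || (y == c)).
Proof.
split => [[s hs]|[c hc]].
  exists ((s^-1)%g (Ordinal n_gt0)) => x y.
  by rewrite hs /star_rel (inj_eq perm_inj) !val_perm_eq0.
exists (tperm c (Ordinal n_gt0)) => x y.
by rewrite hc /star_rel (inj_eq perm_inj) !val_perm_eq0 tpermV tpermR.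
Qed.

End StarIsomorphism.

Definition branch (n : nat) (e : rel 'I_n) (j y : 'I_n) : {set 'I_n} :=
  [set x | (gdist e y x < gdist e j x)%N].

Definition internal (n : nat) (e : rel 'I_n) (x : 'I_n) : bool :=
  (1 < #|[set y | e x y]|)%N.

Definition stem (n : nat) (e : rel 'I_n) (x : 'I_n) : 'I_n :=
  if internal e x then x else odflt x [pick p | e x p].

Definition slack (n : nat) (e : rel 'I_n) (i : 'I_n) : nat :=
  (\sum_(j < n) gdist e i j * (Dmax e - transmission e j))%N.

Definition internal_gdist_sum (n : nat) (e : rel 'I_n) (i : 'I_n) : nat :=
  (\sum_(q | internal e q) gdist e i q)%N.

Lemma transmission_le_Dmax (n : nat) (e : rel 'I_n) i :
  (transmission e i <= Dmax e)%N.
Proof. exact: (leq_bigmax_cond (P := xpredT)). Qed.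

Lemma weighted_colsum_add_slack (n : nat) (e : rel 'I_n) j :
  (\sum_(i < n) gdist e j i * transmission e i + slack e j
   = Dmax e * transmission e j)%N.
Proof.
rewrite -big_split /= [transmission e j]/transmission big_distrr /=.
by apply: eq_bigr => i _; rewrite -mulnDr subnKC ?transmission_le_Dmax // mulnC.
Qed.

Lemma exists_ord_neq (n : nat) (x : 'I_n) : (2 <= n)%N -> exists y : 'I_n, y != x.
Proof.
rewrite -[n in (_ <= n)%N]card_ord => /card_gt1P [a [b [_ _ hab]]].
by case: (eqVneq a x) => [hax|]; [exists b; rewrite -hax eq_sym | exists a].
Qed.

Section Tree.
Variables (n : nat) (e : rel 'I_n).
Hypothesis e_tree : is_tree e.

Let e_irr : irreflexive e. Proof. by case: e_tree => -[]. Qed.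
Let e_sym : symmetric e. Proof. by case: e_tree => -[]. Qed.
Let e_conn : connected_graph e. Proof. by case: e_tree. Qed.
Let e_acyclic : acyclic_graph e. Proof. by case: e_tree. Qed.

Lemma internal_gt2 x : internal e x -> (2 < n)%N.
Proof.
move=> hx; have sub : [set y | e x y] \subset [set~ x].
  by apply/fintype.subsetP => y; rewrite !inE; apply: contraTneq => ->; rewrite e_irr.
by have := leq_trans hx (subset_leq_card sub); rewrite cardsC1 card_ord; lia.
Qed.

(* Walking towards [x] from both ends of such a path would close a cycle. *)
Lemma tree_no_level_path x k a c :
  uniq (a :: c) -> c != [::] -> path e a c ->
  gdist e a x = k -> gdist e (last a c) x = k ->
  (forall z, z \in a :: c -> (k <= gdist e z x)%N) -> False.
Proof.
elim: k a c => [|k IH] a c hu hne hp ha hb hall.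
  move/eqP: ha; move/eqP: hb; rewrite !gdist_eq0 // => /eqP hb /eqP ha.
  case: c hne hu hp hb {hall} => [//|y c] _ /andP[+ _] _ /= hb.
  by rewrite ha -hb mem_last.
have [a' haa' ha'] := gdist_predS e_conn ha.
have [b' hbb' hb'] := gdist_predS e_conn hb.
have na' : a' \notin a :: c by apply/negP => /hall; rewrite ha' ltnn.
have nb' : b' \notin a :: c by apply/negP => /hall; rewrite hb' ltnn.
case: (eqVneq a' b') => [eab|neab].
  apply: (negP (e_acyclic (c := a' :: a :: c) _ _)).
  - by rewrite /= na'.
  - by case: (c) hne.
  by rewrite /= -cats1 /= e_sym haa' cat_path hp /= eab hbb'.
apply: (IH a' (rcons (a :: c) b')) => //.
- move: na' nb' hu; rewrite !in_cons !negb_or => /andP[na1 na2] /andP[nb1 nb2] /andP[hu1 hu2].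
  rewrite /= -rcons_cons !mem_rcons rcons_uniq !in_cons [a == b']eq_sym.
  by rewrite (negbTE neab) (negbTE na1) (negbTE nb1) na2 hu1 nb2.
- by rewrite /= -cats1 cat_path e_sym haa' hp /= hbb'.
- by rewrite last_rcons.
move=> z; rewrite in_cons mem_rcons in_cons => /or3P [/eqP->|/eqP->|/hall/ltnW //].
  by rewrite ha'.
by rewrite hb'.
Qed.

Lemma tree_gdist_adj j y x : e j y ->
  gdist e y x = (gdist e j x).+1 \/ gdist e j x = (gdist e y x).+1.
Proof.
move=> hjy; have h1 := gdist_adj_le e_conn x hjy.
have h2 := gdist_adj_le e_conn x (etrans (e_sym _ _) hjy).
case: (eqVneq (gdist e j x) (gdist e y x)) => heq; last by lia.
exfalso; apply: (tree_no_level_path (c := [:: y]) _ _ _ (erefl _) (esym heq)).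
- by rewrite /= inE andbT; apply: contraTneq hjy => ->; rewrite e_irr.
- by [].
- by rewrite /= hjy.
- by move=> z; rewrite !inE => /orP[] /eqP ->; rewrite ?heq.
Qed.

Lemma tree_closer_neighbour_unique j y1 y2 x : e j y1 -> e j y2 ->
  (gdist e y1 x < gdist e j x)%N -> (gdist e y2 x < gdist e j x)%N -> y1 = y2.
Proof.
move=> h1 h2 l1 l2; apply/eqP/negPn/negP => hne.
have E1 := tree_gdist_adj x h1; have E2 := tree_gdist_adj x h2.
have eq12 : gdist e y1 x = gdist e y2 x by lia.
apply: (tree_no_level_path (a := y1) (c := [:: j; y2]) _ _ _ (erefl _) (esym eq12)).
- rewrite /= !inE negb_or hne !andbT; apply/andP; split.
    by apply: contraTneq h1 => ->; rewrite e_irr.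
  by apply: contraTneq h2 => <-; rewrite e_irr.
- by [].
- by rewrite /= e_sym h1 h2.
- by move=> z; rewrite !inE => /or3P [] /eqP ->; lia.
Qed.

Lemma transmission_adj j y : e j y ->
  (transmission e y + 2 * #|branch e j y| = transmission e j + n)%N.
Proof.
move=> hjy.
have H : (\sum_(x < n) (gdist e y x + (if x \in branch e j y then 2 else 0)) =
          \sum_(x < n) (gdist e j x + 1))%N.
  apply: eq_bigr => x _; rewrite inE.
  by case: (tree_gdist_adj x hjy) => ->; rewrite ?ltnn ?ltnS ?leqnn ?ltnNge ?leqnSn //=; lia.
rewrite !big_split /= -big_mkcond sum_nat_const sum1_card card_ord in H.
by rewrite /transmission -H mulnC.
Qed.

Hypothesis n_ge2 : (2 <= n)%N.

Lemma transmission_gt0 i : (0 < transmission e i)%N.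
Proof.
have [y hyi] := exists_ord_neq i n_ge2.
by rewrite /transmission (bigD1 y) //= addn_gt0 lt0n gdist_eq0 // eq_sym hyi.
Qed.

Lemma stem_leaf x : ~~ internal e x ->
  e x (stem e x) /\ forall z, e x z -> z = stem e x.
Proof.
move=> hx; have [y hyx] := exists_ord_neq x n_ge2.
have : gdist e x y != 0%N by rewrite gdist_eq0 // eq_sym.
case hk: (gdist e x y) => [//|k] _; have [p hxp _] := gdist_predS e_conn hk.
have uniq_nb z : e x z -> z = p.
  move=> hxz; apply/eqP; apply: contraNT hx => hzp.
  by apply/card_gt1P; exists z, p; rewrite !inE hxz hxp.
rewrite /stem (negbTE hx); case: pickP => [p' hp'|/(_ p)]; last by rewrite hxp.
by rewrite /= (uniq_nb p' hp'); split.
Qed.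

Lemma leaf_gdist x y : ~~ internal e x -> y != x ->
  gdist e x y = (gdist e (stem e x) y).+1.
Proof.
move=> hx hyx; have [_ hu] := stem_leaf hx.
have : gdist e x y != 0%N by rewrite gdist_eq0 // eq_sym.
case hk: (gdist e x y) => [//|k] _.
by have [z hxz <-] := gdist_predS e_conn hk; rewrite -(hu z hxz).
Qed.

Lemma leaf_transmission x : ~~ internal e x ->
  (transmission e x + 2 = transmission e (stem e x) + n)%N.
Proof.
move=> hx; have [hxp _] := stem_leaf hx.
have hpx : e (stem e x) x by rewrite e_sym.
rewrite -(transmission_adj hpx).
suff -> : branch e (stem e x) x = [set x] by rewrite cards1 muln1.
apply/setP => z; rewrite !inE; case: (eqVneq z x) => [->|hzx].
  by rewrite gdist_xx // lt0n gdist_eq0 //; apply: contraTneq hxp => ->; rewrite e_irr.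
by rewrite (leaf_gdist hx hzx) ltnNge leqnSn.
Qed.

(* Branches at distinct neighbours of [j] are disjoint, so one has at most (n - 1) / 2 vertices. *)
Lemma internal_transmission_step j : internal e j ->
  exists2 y, (transmission e j < transmission e y)%N &
    internal e y \/ (transmission e y + 2 = transmission e j + n)%N.
Proof.
case/card_gt1P => [y1 [y2 []]]; rewrite !inE => h1 h2 hne.
have hdis : branch e j y1 :&: branch e j y2 = finset.set0.
  apply/setP => x; rewrite !inE; apply/negP => /andP [l1 l2].
  by move: hne; rewrite (tree_closer_neighbour_unique h1 h2 l1 l2) eqxx.
have hsub : branch e j y1 :|: branch e j y2 \subset [set~ j].
  apply/fintype.subsetP => x; rewrite !inE.
  by apply: contraTneq => ->; rewrite gdist_xx // !ltn0.
have := subset_leq_card hsub.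
rewrite cardsC1 card_ord cardsU hdis cards0 subn0 => hcard.
suff [y hjy hB] : exists2 y, e j y & (2 * #|branch e j y| <= n.-1)%N.
  have hT := transmission_adj hjy; exists y; first by lia.
  case hiy: (internal e y); [by left | right].
  have [hyj hu] := stem_leaf (negbT hiy).
  by rewrite leaf_transmission ?hiy // -(hu j) // e_sym.
case: (leqP (2 * #|branch e j y1|) n.-1) => hh; first by exists y1.
by exists y2 => //; lia.
Qed.

Lemma transmission_internal_le j : internal e j ->
  (transmission e j + n <= Dmax e + 2)%N.
Proof.
have [m] := ubnP (Dmax e - transmission e j); elim: m j => [//|m IH] j hm hj.
have [y hlt hy] := internal_transmission_step hj.
have hDy := transmission_le_Dmax e y.
case: hy => [hy|]; last by lia.
by have := IH y ltac:(lia) hy; lia.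
Qed.

Lemma slack_ge i : ((n - 2) * internal_gdist_sum e i <= slack e i)%N.
Proof.
rewrite /internal_gdist_sum big_distrr /= big_mkcond /=; apply: leq_sum => j _.
case hj: (internal e j) => //; rewrite mulnC leq_mul //.
by have := transmission_internal_le hj; lia.
Qed.

(* Termwise, d(i, x) <= d(i, stem x) + [x is a leaf], with 2 to spare at x = i if i is a leaf. *)
Lemma transmission_le_stem_sum i :
  (transmission e i + (if internal e i then 0 else 2) <=
   \sum_(x < n) gdist e i (stem e x) + #|[set x | ~~ internal e x]|)%N.
Proof.
have -> : (if internal e i then 0 else 2)%N =
    (\sum_(x < n) (if (x == i) && ~~ internal e x then 2 else 0))%N.
  rewrite (bigD1 i) //= eqxx big1 ?addn0 => [|x /negbTE -> //].
  by case: (internal e i).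
rewrite -sum1_card [X in (_ <= _ + X)%N]big_mkcond /transmission -!big_split /=.
apply: leq_sum => x _.
rewrite inE; case hx: (internal e x); first by rewrite /stem hx andbF.
have [hxp _] := stem_leaf (negbT hx).
case: (eqVneq x i) => [<-|hxi] /=.
  by rewrite gdist_xx //; move: hxp; rewrite -gdist_eq1 // => /eqP ->.
rewrite (gdist_sym e_conn e_irr e_sym i x) leaf_gdist ?hx // ?(eq_sym i) //.
by rewrite (gdist_sym e_conn e_irr e_sym _ i) addn0 addn1.
Qed.

Section NonStar.
Hypothesis not_star : ~ graph_iso e (@star_rel n).

Lemma exists_nonneighbour q : exists2 z, z != q & ~~ e q z.
Proof.
pose P := [exists z in [pred z | z != q], ~~ e q z].
have [/exists_inP [z hzq hqz] | /exists_inPn hq] := boolP P; first by exists z.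
exfalso; apply/not_star/(graph_iso_starP _ (ltnW n_ge2)); exists q => x y.
have hqa a : a != q -> e q a by move/hq/negbNE.
case: (eqVneq x q) => [->|hxq] /=.
  by case: (eqVneq q y) => [<-|hqy]; rewrite ?e_irr // hqa // eq_sym.
case: (eqVneq y q) => [->|hyq] /=; first by rewrite andbT e_sym hqa.
rewrite andbF; apply/negP => hxy.
have hxy' : x != y by apply: contraTneq hxy => ->; rewrite e_irr.
apply: (negP (e_acyclic (c := [:: q; x; y]) _ _)) => //.
  by rewrite /= !inE !negb_or ![q == _]eq_sym hxq hyq hxy'.
by rewrite /= hqa // hxy e_sym hqa.
Qed.

Lemma exists_internal_neighbour q : exists2 r, e q r & internal e r.
Proof.
have [z hzq hqz] := exists_nonneighbour q.
have : gdist e q z != 0%N by rewrite gdist_eq0 // eq_sym.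
case hk: (gdist e q z) => [//|k] _; have [r hqr hrz] := gdist_predS e_conn hk.
exists r => //.
have : gdist e r z != 0%N.
  by rewrite gdist_eq0 //; apply: contraNneq hqz => <-.
case hk': (gdist e r z) => [//|k'] _; have [r' hrr' hr'z] := gdist_predS e_conn hk'.
apply/card_gt1P; exists q, r'; rewrite !inE e_sym hqr hrr'; split => //.
by apply/eqP => hqr'; move: hk; rewrite hqr' hr'z; lia.
Qed.

Lemma exists_internal_neq x : exists2 r, internal e r & r != x.
Proof.
have [r hxr hr] := exists_internal_neighbour x; exists r => //.
by apply: contraTneq hxr => ->; rewrite e_irr.
Qed.

Lemma stem_internal x : internal e (stem e x).
Proof.
case hx: (internal e x); first by rewrite /stem hx.
have [hxp hu] := stem_leaf (negbT hx).
have [r hpr hr] := exists_internal_neighbour (stem e x).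
case hp: (internal e (stem e x)) => //.
have [_ hu'] := stem_leaf (negbT hp).
by move: hr; rewrite (hu' r hpr) -(hu' x) ?hx // e_sym.
Qed.

Lemma card_stem_fibre q : internal e q -> (#|[set x | stem e x == q]| <= n - 2)%N.
Proof.
move=> hq; have [z hzq hqz] := exists_nonneighbour q.
have [r hqr hr] := exists_internal_neighbour q.
have hzr : z != r by apply: contraNneq hqz => ->.
have hsub : [set x | stem e x == q] \subset ~: [set z; r].
  apply/fintype.subsetP => x; rewrite !inE negb_or => /eqP hx.
  apply/andP; split; apply/eqP => hh; subst x.
    case hiz: (internal e z); first by move: hx hzq; rewrite /stem hiz => ->; rewrite eqxx.
    have [hzp _] := stem_leaf (negbT hiz).
    by move: hqz; rewrite -hx e_sym hzp.
  by move: hx hqr; rewrite /stem hr => ->; rewrite e_irr.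
have := cardsC [set z; r]; rewrite cards2 hzr card_ord.
by have := subset_leq_card hsub; lia.
Qed.

Lemma card_leaves : (#|[set x | ~~ internal e x]| <= n - 2)%N.
Proof.
have [r1 hr1 _] := exists_internal_neq (Ordinal (ltnW n_ge2)).
have [r2 hr2 hr21] := exists_internal_neq r1.
have hsub : [set x | ~~ internal e x] \subset ~: [set r1; r2].
  by apply/fintype.subsetP => x; rewrite !inE; apply: contraNN => /orP[] /eqP ->.
have := cardsC [set r1; r2]; rewrite cards2 eq_sym hr21 card_ord.
by have := subset_leq_card hsub; lia.
Qed.

Lemma stem_gdist_sum_le i :
  (\sum_(x < n) gdist e i (stem e x) <= (n - 2) * internal_gdist_sum e i)%N.
Proof.
rewrite (partition_big (stem e) (internal e)) /=; last by move=> x _; exact: stem_internal.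
rewrite /internal_gdist_sum big_distrr /=; apply: leq_sum => q hq.
rewrite (eq_bigr (fun _ => gdist e i q)); last by move=> x /eqP ->.
rewrite sum_nat_const leq_mul // (leq_trans _ (card_stem_fibre hq)) //.
by apply: subset_leq_card; apply/fintype.subsetP => x; rewrite !inE.
Qed.

Lemma internal_gdist_sum_ge i :
  ((if internal e i then 1 else 3) <= internal_gdist_sum e i)%N.
Proof.
rewrite /internal_gdist_sum; case hi: (internal e i).
  have [r hr hri] := exists_internal_neq i.
  by rewrite (bigD1 r) //= -[1%N]addn0 leq_add // lt0n gdist_eq0 // eq_sym.
have [hip hu] := stem_leaf (negbT hi).
have [r hr hri] := exists_internal_neq (stem e i).
rewrite (bigD1 (stem e i)) ?stem_internal //= (bigD1 r) /=; last by rewrite hr hri.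
have -> : gdist e i (stem e i) = 1%N by apply/eqP; rewrite gdist_eq1.
have : gdist e i r != 0%N by rewrite gdist_eq0 //; apply: contraFneq hi => ->.
have : gdist e i r != 1%N by rewrite gdist_eq1 //; apply: contra hri => /hu ->.
lia.
Qed.

Lemma transmission_le_internal_gdist_sum i :
  (transmission e i + (if internal e i then 0 else 2)
   <= (n - 2) * (internal_gdist_sum e i).+1)%N.
Proof.
rewrite mulnSr; apply: leq_trans (transmission_le_stem_sum i) _.
exact: leq_add (stem_gdist_sum_le i) card_leaves.
Qed.

Lemma transmission_le_slack i : (transmission e i <= 2 * slack e i)%N.
Proof.
have hS : (0 < internal_gdist_sum e i)%N.
  by apply: leq_trans (internal_gdist_sum_ge i); case: internal.
have hNS : (n - 2 <= (n - 2) * internal_gdist_sum e i)%N by rewrite leq_pmulr.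
have := transmission_le_internal_gdist_sum i; have := slack_ge i.
by rewrite mulnSr; lia.
Qed.

Lemma max_transmission_le_slack i : transmission e i = Dmax e ->
  (3 * transmission e i <= 4 * slack e i)%N.
Proof.
move=> hmax; have hi : ~~ internal e i.
  by apply/negP => hi; have := transmission_internal_le hi; have := internal_gt2 hi; lia.
have := internal_gdist_sum_ge i; rewrite (negbTE hi) => hS.
have hNS : (3 * (n - 2) <= (n - 2) * internal_gdist_sum e i)%N.
  by rewrite mulnC leq_mul2l hS orbT.
have := transmission_le_internal_gdist_sum i; have := slack_ge i.
by rewrite (negbTE hi) mulnSr; lia.
Qed.

Let colsum_transmission_sym j :
  (\sum_(i < n) transmission e i * gdist e i j
   = \sum_(i < n) gdist e j i * transmission e i)%N.
Proof. by apply: eq_bigr => i _; rewrite mulnC (gdist_sym e_conn e_irr e_sym i j). Qed.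

Lemma transmission_colsum_dist_le j :
  (2 * \sum_(i < n) transmission e i * gdist e i j + transmission e j
   <= 2 * Dmax e * transmission e j)%N.
Proof.
rewrite colsum_transmission_sym.
have := weighted_colsum_add_slack e j; have := transmission_le_slack j.
rewrite -mulnA; lia.
Qed.

Lemma transmission_colsum_distQ_le j :
  (4 * (\sum_(i < n) transmission e i * gdist e i j + transmission e j * transmission e j)
   + 3 * transmission e j <= 8 * Dmax e * transmission e j)%N.
Proof.
rewrite colsum_transmission_sym.
have := weighted_colsum_add_slack e j.
rewrite -mulnA; have [hlt|hmax] := ltnP (transmission e j) (Dmax e).
  have : (transmission e j * transmission e j + transmission e j
          <= Dmax e * transmission e j)%N by rewrite addnC -mulSn leq_mul2r hlt orbT.
  lia.
have {}hmax : transmission e j = Dmax e.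
  by apply/eqP; rewrite eqn_leq transmission_le_Dmax.
have := max_transmission_le_slack hmax; rewrite [in X in (_ * X)%N]hmax.
lia.
Qed.

End NonStar.
End Tree.

Section NonStarSpectrum.
Local Open Scope ring_scope.
Variables (R : realType) (n : nat) (e : rel 'I_n).
Hypotheses (e_tree : is_tree e) (n_ge2 : (2 <= n)%N).
Hypothesis not_star : ~ graph_iso e (@star_rel n).

Let w i : R := (transmission e i)%:R.

Let w_gt0 i : 0 < w i.
Proof. by rewrite ltr0n transmission_gt0. Qed.

Let Dmax_ge1 : 1 <= (Dmax e)%:R :> R.
Proof.
rewrite ler1n; have i : 'I_n := Ordinal (ltnW n_ge2).
exact: leq_trans (transmission_gt0 e_tree n_ge2 i) (transmission_le_Dmax e i).
Qed.

Let colsum_dist j :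
  \sum_i w i * dist_mx R e i j = (\sum_(i < n) transmission e i * gdist e i j)%N%:R.
Proof. by rewrite natr_sum; apply: eq_bigr => i _; rewrite mxE natrM. Qed.

Lemma largest_eig_dist_le : largest_eig (dist_mx R e) <= (Dmax e)%:R - 1 / 2.
Proof.
apply: largest_eig_le => [|a ha]; first by have := Dmax_ge1; lra.
apply: (eigenvalue_le_colsum_bound (@dist_mx_ge0 R n e) w_gt0 _ ha) => j; rewrite colsum_dist.
have := transmission_colsum_dist_le e_tree n_ge2 not_star j.
rewrite -(ler_nat R) !natrD !natrM /w; nra.
Qed.

Lemma largest_eig_distQ_le : largest_eig (distQ_mx R e) <= 2 * (Dmax e)%:R - 3 / 4.
Proof.
apply: largest_eig_le => [|a ha]; first by have := Dmax_ge1; lra.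
apply: (eigenvalue_le_colsum_bound (@distQ_mx_ge0 R n e) w_gt0 _ ha) => j.
rewrite distQ_mx_colsum colsum_dist.
have := transmission_colsum_distQ_le e_tree n_ge2 not_star j.
rewrite -(ler_nat R) !natrD !natrM /w; nra.
Qed.

End NonStarSpectrum.

Section ConstantSums.
Local Open Scope ring_scope.
Variables (V : nmodType) (n : nat) (f : 'I_n -> V) (b : V).

Lemma sumr_const_but1 c :
  (forall i, i != c -> f i = b) -> \sum_i f i = f c + b *+ (n - 1).
Proof.
move=> hf; rewrite (bigD1 c) //= (eq_bigr (fun _ => b)) // sumr_const.
congr (_ + _ *+ _); have := cardC1 c; rewrite card_ord subn1 => <-.
by apply: eq_card => i; rewrite !inE.
Qed.

Lemma sumr_const_but2 c j : j != c ->
  (forall i, i != j -> i != c -> f i = b) -> \sum_i f i = f j + f c + b *+ (n - 2).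
Proof.
move=> hjc hf; rewrite (bigD1 j) //= (bigD1 c) 1?eq_sym //= addrA.
rewrite (eq_bigr (fun _ => b)) => [|i /andP[]]; last exact: hf.
rewrite sumr_const; congr (_ + _ *+ _).
have := cardsC [set j; c]; rewrite cards2 hjc card_ord.
suff -> : #|(fun i : 'I_n => (i != j) && (i != c))| = #|~: [set j; c]| by lia.
by apply: eq_card => i; rewrite !inE negb_or.
Qed.

End ConstantSums.

Section Star.
Local Open Scope ring_scope.
Variables (R : realType) (n : nat) (e : rel 'I_n) (c : 'I_n).
Hypothesis n_ge2 : (2 <= n)%N.
Hypothesis e_star : forall x y, e x y = (x != y) && ((x == c) || (y == c)).

Let N : R := n%:R.

Let e_irr : irreflexive e.
Proof. by move=> x; rewrite e_star eqxx. Qed.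

Let e_sym : symmetric e.
Proof. by move=> x y; rewrite !e_star eq_sym orbC. Qed.

Let e_conn : connected_graph e.
Proof.
have e_c x : x != c -> e x c by move=> hxc; rewrite e_star hxc eqxx orbT.
move=> x y; have cx : connect e x c by case: (eqVneq x c) => [->|/e_c/connect1].
have cy : connect e c y.
  by case: (eqVneq y c) => [->|hyc] //; apply: connect1; rewrite e_sym e_c.
exact: connect_trans cx cy.
Qed.

Lemma gdist_star x y :
  gdist e x y = if x == y then 0%N else if (x == c) || (y == c) then 1%N else 2%N.
Proof.
case: (eqVneq x y) => [->|hxy]; first by rewrite gdist_xx.
case: ifP => hc; first by apply/eqP; rewrite gdist_eq1 // e_star hxy hc.
move/negbT: hc; rewrite negb_or => /andP[hxc hyc].
have : (gdist e x y <= 2)%N.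
  apply: (gdist_min e_conn) (walk_len_cons (z := c) _ (walk_len_cons (z := y) _ _)).
  - by rewrite e_star hxc eqxx orbT.
  - by rewrite e_star eq_sym hyc eqxx.
  - by rewrite walk_len0.
have : gdist e x y != 0%N by rewrite gdist_eq0.
have : gdist e x y != 1%N by rewrite gdist_eq1 // e_star hxy (negbTE hxc) (negbTE hyc).
lia.
Qed.

Lemma star_colsum (a b : R) j :
  \sum_i (if i == c then a else b) * (gdist e i j)%:R
  = if j == c then b * (N - 1) else a + 2 * b * (N - 2).
Proof.
have hN1 : ((n - 1)%N%:R : R) = N - 1 by rewrite natrB // ltnW.
have hN2 : ((n - 2)%N%:R : R) = N - 2 by rewrite natrB.
case: (eqVneq j c) => [->|hjc].
  rewrite (sumr_const_but1 (b := b) (c := c)) => [|i hic].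
    by rewrite gdist_xx // mulr0 add0r -mulr_natr hN1.
  by rewrite gdist_star (negbTE hic) eqxx orbT mulr1.
rewrite (sumr_const_but2 (b := 2 * b) hjc) => [|i hij hic].
  rewrite gdist_xx // gdist_star [c == j]eq_sym (negbTE hjc) eqxx /= mulr0 mulr1 add0r.
  by rewrite -[2 * b *+ _]mulr_natr hN2.
by rewrite gdist_star (negbTE hij) (negbTE hic) (negbTE hjc) mulrC.
Qed.

Lemma transmission_star x :
  (transmission e x)%:R = if x == c then N - 1 else 2 * N - 3.
Proof.
rewrite /transmission natr_sum.
rewrite (eq_bigr (fun i => (if i == c then 1 else 1) * (gdist e i x)%:R)).
  by rewrite star_colsum; case: (x == c); lra.
by move=> i _; rewrite if_same mul1r (gdist_sym e_conn e_irr e_sym).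
Qed.

Lemma Dmax_star : (Dmax e)%:R = 2 * N - 3.
Proof.
have [x hxc] := exists_ord_neq c n_ge2.
have hN : 2 <= N by rewrite /N (ler_nat R 2 n).
suff -> : Dmax e = transmission e x by rewrite transmission_star (negbTE hxc).
apply/eqP; rewrite eqn_leq transmission_le_Dmax andbT.
apply/bigmax_leqP => i _; rewrite -(ler_nat R) !transmission_star (negbTE hxc).
by case: (i == c); lra.
Qed.

(* A weight vector constant off the centre reduces both matrices to their 2 x 2 quotient. *)
Lemma largest_eig_dist_star (l : R) :
  0 < l -> l ^+ 2 = 2 * (N - 2) * l + (N - 1) -> largest_eig (dist_mx R e) = l.
Proof.
move=> l_gt0 hl; have hN : 2 <= N by rewrite /N (ler_nat R 2 n).
apply: (@largest_eig_pos_eigenvector _ _ _ (fun i => if i == c then N - 1 else l) _ c).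
- exact: dist_mx_ge0.
- by move=> i; case: (i == c); lra.
move=> j; under eq_bigr do rewrite mxE.
by rewrite star_colsum; case: (j == c); [ring | nra].
Qed.

Lemma largest_eig_distQ_star (m : R) : N - 1 < m ->
  m ^+ 2 = (5 * N - 8) * m - 4 * (N - 1) * (N - 2) -> largest_eig (distQ_mx R e) = m.
Proof.
move=> hm hm2; have hN : 2 <= N by rewrite /N (ler_nat R 2 n).
apply: (@largest_eig_pos_eigenvector _ _ _
  (fun i => if i == c then N - 1 else m - (N - 1)) _ c).
- exact: distQ_mx_ge0.
- by move=> i; case: (i == c); lra.
move=> j; rewrite distQ_mx_colsum; under eq_bigr do rewrite mxE.
by rewrite star_colsum transmission_star; case: (j == c); [ring | nra].
Qed.

End Star.

Local Open Scope ring_scope.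

Lemma star_dist_root (R : rcfType) (N : R) : 2 <= N ->
  let l := (2 * N - 4 + Num.sqrt (4 * N ^+ 2 - 12 * N + 12)) / 2 in
  0 < l /\ l ^+ 2 = 2 * (N - 2) * l + (N - 1).
Proof.
move=> N_ge2.
have ht : Num.sqrt (4 * N ^+ 2 - 12 * N + 12) ^+ 2 = 4 * N ^+ 2 - 12 * N + 12.
  by rewrite sqr_sqrtr //; nra.
have ht0 : 0 < Num.sqrt (4 * N ^+ 2 - 12 * N + 12) by rewrite sqrtr_gt0; nra.
by move=> l; rewrite {}/l; split; nra.
Qed.

Lemma star_distQ_root (R : rcfType) (N : R) : 2 <= N ->
  let m := (5 * N - 8 + Num.sqrt (9 * N ^+ 2 - 32 * N + 32)) / 2 in
  N - 1 < m /\ m ^+ 2 = (5 * N - 8) * m - 4 * (N - 1) * (N - 2).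
Proof.
move=> N_ge2.
have ht : Num.sqrt (9 * N ^+ 2 - 32 * N + 32) ^+ 2 = 9 * N ^+ 2 - 32 * N + 32.
  by rewrite sqr_sqrtr //; nra.
have ht0 : 0 < Num.sqrt (9 * N ^+ 2 - 32 * N + 32) by rewrite sqrtr_gt0; nra.
by move=> m; rewrite {}/m; split; nra.
Qed.

Lemma dist_bound_lt_half (R : rcfType) (N : R) : 2 <= N ->
  (2 * N - 2 - Num.sqrt (4 * N ^+ 2 - 12 * N + 12)) / 2 < 1 / 2.
Proof.
move=> N_ge2.
suff : 2 * N - 3 < Num.sqrt (4 * N ^+ 2 - 12 * N + 12) by lra.
rewrite -[2 * N - 3]ger0_norm -?sqrtr_sqr ?ltr_sqrt; nra.
Qed.

Lemma distQ_bound_lt_three_quarters (R : rcfType) (N : R) : 2 <= N ->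
  (3 * N - 4 - Num.sqrt (9 * N ^+ 2 - 32 * N + 32)) / 2 < 3 / 4.
Proof.
move=> N_ge2.
suff : 3 * N - 11 / 2 < Num.sqrt (9 * N ^+ 2 - 32 * N + 32) by lra.
rewrite -[3 * N - 11 / 2]ger0_norm -?sqrtr_sqr ?ltr_sqrt; nra.
Qed.

Theorem theorem2 (R : realType) (n : nat) (e : rel 'I_n) :
  (2 <= n)%N -> is_tree e ->
  let d := (Dmax e)%:R - largest_eig (dist_mx R e) in
  let q := 2 * (Dmax e)%:R - largest_eig (distQ_mx R e) in
  let b1 := (2 * n%:R - 2 - Num.sqrt (4 * n%:R ^+ 2 - 12 * n%:R + 12)) / 2 : R in
  let b2 := (3 * n%:R - 4 - Num.sqrt (9 * n%:R ^+ 2 - 32 * n%:R + 32)) / 2 : R in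
  [/\ b1 <= d, b2 <= q,
      d = b1 <-> graph_iso e (@star_rel n)
    & q = b2 <-> graph_iso e (@star_rel n)].
Proof.
move=> hn ht d q b1 b2; have hN : (2 : R) <= n%:R by rewrite (ler_nat R 2 n).
have [hstar|hnstar] := pselect (graph_iso e (@star_rel n)).
  have [c he] := (graph_iso_starP e (ltnW hn)).1 hstar.
  have [l_gt0 hl] := star_dist_root hN; have [m_gt hm] := star_distQ_root hN.
  have hd : d = b1.
    by rewrite /d (Dmax_star R hn he) (largest_eig_dist_star hn he l_gt0 hl) /b1; lra.
  have hq : q = b2.
    by rewrite /q (Dmax_star R hn he) (largest_eig_distQ_star hn he m_gt hm) /b2; lra.
  by rewrite hd hq.
have hD := largest_eig_dist_le R ht hn hnstar.
have hQ := largest_eig_distQ_le R ht hn hnstar.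
have hb1 := dist_bound_lt_half hN; have hb2 := distQ_bound_lt_three_quarters hN.
have [l1 l2] : b1 < d /\ b2 < q by rewrite /d /q /b1 /b2; split; lra.
by rewrite !ltW //; split; split => // h; [move: l1 | move: l2]; rewrite h ltxx.
Qed.
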